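(* The zero-error capacity of the $(w,d)$ sliding-window symmetric channel over $\mathbb{Z}_q$ satisfies $$1-\frac{1}{w}\log_q V^w_{2d}(q)\ \le\ C_0\ \le\ 1-\frac{d}{w}\log_q(q-1).$$ Moreover, if $d\ge w/2$ then $C_0=0$.
   Context: $V^n_r(q)=\sum_{i=0}^{\min(r,n)}\binom{n}{i}(q-1)^i$. Integers $w\ge1$, $0\le d\le w$, $q\ge2$. The $(w,d)$ sliding-window symmetric channel has input and output alphabet $\mathbb{Z}_q$; a noise word $v(0:n-1)\in\mathbb{Z}_q^n$ is admissible if for some initial pattern $v(-w:-1)\in\mathbb{Z}_q^w$ every $w$ consecutive entries of $(v(-w),\dots,v(n-1))$ contain at most $d$ nonzero entries; the output is $y(t)=x(t)+v(t)\bmod q$. A zero-error code of length $n$ is a set $\mathcal{F}\subseteq\mathbb{Z}_q^n$ such that no output word can be produced by two distinct codewords under admissible noise; $C_0=\sup_n\sup_{\mathcal{F}}\log_q|\mathcal{F}|/n$. *)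

From mathcomp Require Import all_boot.
From Stdlib Require Import Reals.

Set Implicit Arguments.
Unset Strict Implicit.
Unset Printing Implicit Defensive.

Definition Vball (n r q : nat) : nat :=
  \sum_(i < (minn r n).+1) 'C(n, i) * (q - 1) ^ i.

Definition word (n q : nat) := {ffun 'I_n -> 'I_q}.

(* A noise word v(0:n-1) is admissible for the (w,d) sliding-window channel
   if there is an initial pattern v(-w:-1) such that every w consecutive
   entries of (v(-w),...,v(n-1)) contain at most d nonzero entries. *)
Definition admissible (w d n q : nat) (v : word n q) : Prop :=
  exists u : word w q,
    let s := [seq nat_of_ord (u i) | i <- enum 'I_w] ++
             [seq nat_of_ord (v i) | i <- enum 'I_n] in
    forall j : nat, j <= n ->
      count (fun a => a != 0) (take w (drop j s)) <= d.

Definition output (n q : nat) (x v : word n q) : 'I_n -> nat :=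
  fun t => (x t + v t) %% q.

Definition zero_error (w d n q : nat) (F : {set word n q}) : Prop :=
  forall x1 x2 : word n q, x1 \in F -> x2 \in F -> x1 <> x2 ->
  forall v1 v2 : word n q, admissible w d v1 -> admissible w d v2 ->
    ~ (forall t, output x1 v1 t = output x2 v2 t).

Definition logq (q : nat) (x : R) : R := (ln x / ln (INR q))%R.

Definition rates (w d q : nat) (r : R) : Prop :=
  exists (n : nat) (F : {set word n q}),
    0 < n /\ 0 < #|F| /\ zero_error w d F /\
    r = (logq q (INR #|F|) / INR n)%R.

Definition is_C0 (w d q : nat) (C : R) : Prop := is_lub (rates w d q) C.

From mathcomp Require Import all_boot zify.
From Stdlib Require Import Reals Lra.
From mathcomp Require Import ssrnat.

Set Implicit Arguments.
Unset Strict Implicit.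
Unset Printing Implicit Defensive.

(* Lower bound: an admissible noise word of length
   [w] has at most [d] nonzero entries, so a length-[w] code of minimum Hamming
   distance [> 2d] is zero-error, and a maximal such code (Gilbert-Varshamov)
   has at least [q^w / V^w_{2d}(q)] words.  Upper bound: noise with arbitrary
   entries on the positions [t] with [t mod w < d] and zeros elsewhere is
   admissible, and a zero-error code [F] yields [|F| q^m] distinct outputs,
   where [m >= d n / w] counts those positions; hence [log_q |F| <= n (1 - d/w)],
   which is at most the claimed bound since [log_q (q-1) <= 1].  For [2d >= w],
   two distinct codewords are always confused by splitting their difference
   between the two noise words along the same periodic pattern. *)

Lemma count_nonzero_window (s : seq nat) j w : j + w <= size s ->
  count (fun a => a != 0) (take w (drop j s)) = \sum_(i < w) (nth 0 s (j + i) != 0).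
Proof.
elim: w j => [|w IHw] j le_jw; first by rewrite take0 big_ord0.
rewrite (drop_nth 0) /=; last by lia.
rewrite IHw; last by lia.
rewrite big_ord_recl addn0; congr (_ + _); apply: eq_bigr => i _.
by rewrite /= addSnnS.
Qed.

Lemma sum_ord_shift_mod (P : pred nat) w j : 0 < w ->
  \sum_(i < w) P ((j + i) %% w) = \sum_(i < w) P i.
Proof.
move=> w_gt0; elim: j => [|j IHj].
  by apply: eq_bigr => i _; rewrite add0n modn_small.
rewrite -IHj; case: w w_gt0 {IHj} => // w _.
rewrite big_ord_recr big_ord_recl /= addnC; congr (_ + _).
  by rewrite addn0 addSnnS modnDr.
by apply: eq_bigr => i _; rewrite /bump /= add1n addSnnS.
Qed.

Lemma sum_ord_ltn w d : \sum_(i < w) (i < d) = minn w d.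
Proof.
elim: w => [|w IHw]; first by rewrite big_ord0 min0n.
by rewrite big_ord_recr /= IHw; case: (ltnP w d) => /=; lia.
Qed.

Lemma sum_ord_geq w d : \sum_(i < w) (d <= i) = w - d.
Proof.
elim: w => [|w IHw]; first by rewrite big_ord0.
by rewrite big_ord_recr /= IHw; case: (leqP d w) => /=; lia.
Qed.

Lemma card_set_sum_ord n (P : pred 'I_n) : #|[set i | P i]| = \sum_(i < n) P i.
Proof.
rewrite -sum1_card big_mkcond /=; apply: eq_bigr => i _.
by rewrite inE; case: (P i).
Qed.

Definition noise_seq w n q (u : word w q) (v : word n q) : seq nat :=
  [seq nat_of_ord (u i) | i <- enum 'I_w] ++ [seq nat_of_ord (v i) | i <- enum 'I_n].

Lemma size_noise_seq w n q (u : word w q) (v : word n q) :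
  size (noise_seq u v) = w + n.
Proof. by rewrite size_cat !size_map -!enumT -!cardT !card_ord. Qed.

Lemma nth_noise_seq_zero_prefix w n q (u : word w q) (v : word n q) k :
  (forall i, nat_of_ord (u i) = 0) ->
  nth 0 (noise_seq u v) k != 0 ->
  exists2 t : 'I_n, t + w = k & nat_of_ord (v t) != 0.
Proof.
move=> u0; rewrite nth_cat size_map size_enum_ord.
case: ltnP => [lt_kw | le_wk].
  by rewrite (nth_map (Ordinal lt_kw)) ?size_enum_ord // u0.
case: (ltnP (k - w) n) => [lt_kn | le_nk]; last first.
  by rewrite nth_default // size_map size_enum_ord.
rewrite (nth_map (Ordinal lt_kn)) ?size_enum_ord // => vt_nz.
by exists (nth (Ordinal lt_kn) (enum 'I_n) (k - w)); rewrite ?nth_enum_ord //; lia.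
Qed.

(* Take the zero initial pattern: every window of length [w] then meets each
   residue class mod [w] exactly once. *)
Lemma admissible_periodic_support w d n q (P : pred nat) (v : word n q) :
  0 < w -> 0 < q -> \sum_(i < w) P i <= d ->
  (forall t : 'I_n, nat_of_ord (v t) != 0 -> P (t %% w)) ->
  admissible w d v.
Proof.
move=> w_gt0 q_gt0 sumP suppP.
pose u : word w q := [ffun _ => Ordinal q_gt0].
have u0 i : nat_of_ord (u i) = 0 by rewrite ffunE.
exists u => /= j le_jn.
rewrite count_nonzero_window ?size_noise_seq; last by lia.
apply: leq_trans sumP; rewrite -(sum_ord_shift_mod P j w_gt0).
apply: leq_sum => i _; case nz: (_ != 0) => //=.
have [t <- vt_nz] := nth_noise_seq_zero_prefix u0 nz.
by rewrite modnDr suppP.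
Qed.

Lemma admissible_card_support w d q (v : word w q) : admissible w d v ->
  #|[set t | nat_of_ord (v t) != 0]| <= d.
Proof.
case=> u /= /(_ w (leqnn w)).
rewrite count_nonzero_window ?size_noise_seq // card_set_sum_ord.
congr (_ <= _); apply: eq_bigr => i _.
rewrite nth_cat size_map size_enum_ord ltnNge leq_addr /= addKn.
by rewrite (nth_map i) ?nth_ord_enum // size_enum_ord.
Qed.

Definition periodic_set (n w d : nat) : {set 'I_n} := [set t : 'I_n | t %% w < d].

Lemma card_periodic_set_lbound n w d : 0 < w -> d <= w ->
  d * n <= #|periodic_set n w d| * w.
Proof.
move=> w_gt0 le_dw; rewrite card_set_sum_ord.
elim/ltn_ind: n => n IHn; case: (ltnP n w) => [lt_nw | le_wn].
  have -> : \sum_(t < n) (t %% w < d) = minn n d.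
    rewrite -sum_ord_ltn; apply: eq_bigr => t _.
    by rewrite modn_small // (ltn_trans (ltn_ord t) lt_nw).
  by case: (leqP n d); nia.
have := IHn (n - w) (ltac:(lia)).
have -> : n = (n - w) + w by rewrite subnK.
rewrite addnK big_split_ord /= (sum_ord_shift_mod (fun k => k < d)) // sum_ord_ltn.
by nia.
Qed.

Section ZeroErrorUpperBound.

Variables w d n q : nat.
Hypotheses (w_gt0 : 0 < w) (q_gt0 : 0 < q).

Let z : 'I_q := Ordinal q_gt0.

Let noise : {set word n q} :=
  [set v : word n q | v \in pffun_on z (periodic_set n w d) predT].

Let admissible_noise v : v \in noise -> admissible w d v.
Proof.
rewrite inE => /pffun_onP [/supportP supp_v _].
apply: (@admissible_periodic_support w d n q (fun k => k < d)) => //.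
  by rewrite sum_ord_ltn geq_minr.
move=> t; case per_t: (t \in periodic_set n w d); first by rewrite inE in per_t.
by rewrite supp_v ?per_t.
Qed.

Let received (p : word n q * word n q) : word n q :=
  [ffun t => Ordinal (ltn_pmod (p.1 t + p.2 t) q_gt0)].

Lemma zero_error_card_mul_le (F : {set word n q}) : zero_error w d F ->
  #|F| * q ^ #|periodic_set n w d| <= q ^ n.
Proof.
move=> zeF.
have card_noise : #|noise| = q ^ #|periodic_set n w d|.
  transitivity #|pffun_on z (periodic_set n w d) predT|.
    by apply: eq_card => v; rewrite inE.
  by rewrite card_pffun_on card_ord.
have inj_received : {in setX F noise &, injective received}.
  move=> [x1 v1] [x2 v2] /setXP [/= x1F v1N] /setXP [/= x2F v2N] eq_out.
  have out_t t : (x1 t + v1 t) %% q = (x2 t + v2 t) %% q.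
    by move/ffunP: eq_out => /(_ t); rewrite !ffunE => /(congr1 val).
  case: (eqVneq x1 x2) out_t => [<- out_t | /eqP neq_x out_t]; last first.
    by case: (zeF x1 x2 x1F x2F neq_x v1 v2 _ _ out_t); apply: admissible_noise.
  congr pair; apply/ffunP => t; apply/val_inj.
  by have /eqP := out_t t; rewrite eqn_modDl !modn_small // => /eqP.
rewrite -card_noise -cardsX -(card_in_imset inj_received).
by apply: leq_trans (max_card _) _; rewrite card_ffun !card_ord.
Qed.

End ZeroErrorUpperBound.

Lemma zero_error_card_le1 w d n q (F : {set word n q}) :
  0 < w -> 0 < q -> w <= 2 * d -> zero_error w d F -> #|F| <= 1.
Proof.
move=> w_gt0 q_gt0 le_w2d zeF; rewrite leqNgt; apply/negP.
case/card_gt1P => x1 [x2 [x1F x2F /eqP neq_x]].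
pose z : 'I_q := Ordinal q_gt0.
pose diff (x y : word n q) t : 'I_q := Ordinal (ltn_pmod (x t + q - y t) q_gt0).
pose v1 : word n q := [ffun t : 'I_n => if t %% w < d then diff x2 x1 t else z].
pose v2 : word n q := [ffun t : 'I_n => if t %% w < d then z else diff x1 x2 t].
have cancel_diff (x y : word n q) t : (y t + diff x y t) %% q = x t %% q.
  rewrite /= modnDmr -(modnDr (x t)); congr (_ %% _); have := ltn_ord (y t); lia.
apply: (zeF x1 x2 x1F x2F neq_x v1 v2).
- apply: (@admissible_periodic_support w d n q (fun k => k < d)) => //.
    by rewrite sum_ord_ltn geq_minr.
  by move=> t; rewrite ffunE; case: ifP.
- apply: (@admissible_periodic_support w d n q (fun k => d <= k)) => //.
    by rewrite sum_ord_geq; lia.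
  by move=> t; rewrite ffunE; case: ifP => //= lt_td _; rewrite leqNgt lt_td.
by move=> t; rewrite /output !ffunE; case: ifP => _ /=; rewrite addn0 cancel_diff.
Qed.

Definition hamming n q (x y : word n q) : nat := #|[set t | x t != y t]|.

Lemma hamming_sym n q (x y : word n q) : hamming x y = hamming y x.
Proof. by apply: eq_card => t; rewrite !inE eq_sym. Qed.

Lemma hamming_xx n q (x : word n q) : hamming x x = 0.
Proof. by apply/eqP; rewrite cards_eq0; apply/eqP/setP => t; rewrite !inE eqxx. Qed.

(* Where the codewords differ, one of the two noise words must be nonzero. *)
Lemma hamming_le_admissible w d q (x1 x2 v1 v2 : word w q) :
  admissible w d v1 -> admissible w d v2 ->
  (forall t, output x1 v1 t = output x2 v2 t) -> hamming x1 x2 <= 2 * d.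
Proof.
move=> adm1 adm2 eq_out.
have sub : [set t | x1 t != x2 t] \subset
    [set t | nat_of_ord (v1 t) != 0] :|: [set t | nat_of_ord (v2 t) != 0].
  apply/subsetP => t; rewrite !inE; apply: contraR; rewrite negb_or !negbK.
  case/andP => /eqP v1t /eqP v2t; have := eq_out t.
  by rewrite /output v1t v2t !addn0 !modn_small // => /val_inj ->.
apply: leq_trans (subset_leq_card sub) _; apply: leq_trans (leq_card_setU _ _) _.
by rewrite mul2n -addnn leq_add // admissible_card_support.
Qed.

Lemma zero_error_of_hamming w d q (F : {set word w q}) :
  {in F &, forall x1 x2, x1 != x2 -> 2 * d < hamming x1 x2} -> zero_error w d F.
Proof.
move=> farF x1 x2 x1F x2F /eqP neq_x v1 v2 adm1 adm2 eq_out.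
by move: (farF x1 x2 x1F x2F neq_x); rewrite ltnNge (hamming_le_admissible adm1 adm2 eq_out).
Qed.

Lemma card_hamming_support n q (x : word n q) (S : {set 'I_n}) :
  #|[set y : word n q | [set t | x t != y t] == S]| = q.-1 ^ #|S|.
Proof.
pose choices := fun t => if t \in S then predC1 (x t) else pred1 (x t).
transitivity #|(family_mem (finfun.fmem choices) : simpl_pred (word n q))|.
  apply: eq_card => y; rewrite inE; apply/eqP/familyP => [supp_y t | y_fam].
    by rewrite /choices -supp_y inE; case: eqVneq => [-> | ]; rewrite inE ?eqxx // eq_sym.
  apply/setP => t; rewrite inE; have := y_fam t; rewrite /choices.
  by case: (t \in S); rewrite inE /= eq_sym // => /eqP ->; rewrite eqxx.
rewrite card_family /image_mem foldrE big_map big_enum /=.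
rewrite (eq_bigr (fun t => if t \in S then q.-1 else 1)); last first.
  by move=> t _; rewrite /choices; case: (t \in S); rewrite ?cardC1 ?card1 ?card_ord.
by rewrite -big_mkcond prod_nat_const.
Qed.

Lemma card_hamming_sphere n q (x : word n q) i :
  #|[set y : word n q | hamming x y == i]| = 'C(n, i) * q.-1 ^ i.
Proof.
rewrite -sum1_card (partition_big (fun y : word n q => [set t | x t != y t])
  (fun S : {set 'I_n} => #|S| == i)) /=; last by move=> y; rewrite inE.
rewrite (eq_bigr (fun S : {set 'I_n} => q.-1 ^ i)); last first.
  move=> S /eqP card_S; rewrite -card_S -(card_hamming_support x S) -sum1_card.
  apply: eq_bigl => y; rewrite !inE /hamming.
  by rewrite andbC; case: eqP => // ->; rewrite eqxx.
rewrite (eq_bigl (fun S => S \in [set S : {set 'I_n} | #|S| == i])) => [|S]; last by rewrite inE.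
by rewrite sum_nat_const card_draws card_ord.
Qed.

Lemma Nat_pow_expn m k : Nat.pow m k = m ^ k.
Proof. by elim: k => //= k ->; rewrite expnS. Qed.

Lemma card_hamming_ball n q (x : word n q) r :
  #|[set y : word n q | hamming x y <= r]| = Vball n r q.
Proof.
have le_hamming y : hamming x y <= n by rewrite -[n in _ <= n]card_ord max_card.
set m := minn r n.
rewrite -sum1_card (partition_big (fun y => (inord (hamming x y) : 'I_m.+1)) predT) //=.
rewrite /Vball -/m; apply: eq_bigr => i _.
rewrite subn1 Nat_pow_expn -(card_hamming_sphere x) -sum1_card; apply: eq_bigl => y.
have le_im : i <= m by rewrite -ltnS.
rewrite !inE; apply/andP/eqP => [[le_r /eqP <-] | hyi].
  by rewrite inordK // ltnS leq_min le_r le_hamming.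
split; first by rewrite hyi (leq_trans le_im (geq_minl _ _)).
by apply/eqP/val_inj; rewrite /= hyi inordK.
Qed.

Lemma leq_card_bigcup (I T : finType) (P : {pred I}) (B : I -> {set T}) :
  #|\bigcup_(i in P) B i| <= \sum_(i in P) #|B i|.
Proof.
apply: (big_ind2 (fun (A : {set T}) k => #|A| <= k)) => [|A1 k1 A2 k2 le1 le2 //|//].
  by rewrite cards0.
by apply: leq_trans (leq_card_setU _ _) _; apply: leq_add.
Qed.

(* Gilbert-Varshamov: a maximal code of minimum distance [> r] is a covering
   code of radius [r], so the radius-[r] balls around its words cover the
   whole space. *)
Lemma exists_hamming_packing n r q : exists F : {set word n q},
  {in F &, forall x1 x2, x1 != x2 -> r < hamming x1 x2} /\
  q ^ n <= #|F| * Vball n r q.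
Proof.
pose packing (A : {set word n q}) :=
  [forall x1 in A, forall x2 in A, (x1 != x2) ==> (r < hamming x1 x2)].
have packing0 : packing set0 by apply/forall_inP => x; rewrite inE.
have [F maxF _] := maxset_exists packing0.
have far : {in F &, forall x1 x2, x1 != x2 -> r < hamming x1 x2}.
  move=> x1 x2 x1F x2F; move/forall_inP: (maxsetp maxF) => /(_ x1 x1F).
  by move/forall_inP => /(_ x2 x2F) /implyP.
exists F; split => //.
have covering y : exists2 x, x \in F & hamming x y <= r.
  apply/exists_inP; apply: contraT => no_cover.
  have far_y x : x \in F -> r < hamming y x.
    move=> xF; rewrite hamming_sym ltnNge; apply: contra no_cover => le_r.
    by apply/exists_inP; exists x.
  have packing_yF : packing (y |: F).
    apply/forall_inP => x1 /setU1P [-> | x1F]; apply/forall_inP => x2 /setU1P [-> | x2F];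
      apply/implyP => neq_x.
    - by rewrite eqxx in neq_x.
    - exact: far_y.
    - by rewrite hamming_sym far_y.
    - exact: far.
  have yF : y \in F by rewrite -(maxsetsup maxF packing_yF (subsetUr _ _)) setU11.
  by case/negP: no_cover; apply/exists_inP; exists y; rewrite ?hamming_xx.
have cover : [set: word n q] \subset \bigcup_(x in F) [set y | hamming x y <= r].
  apply/subsetP => y _; have [x xF le_r] := covering y.
  by apply/bigcupP; exists x; rewrite ?inE.
have := subset_leq_card cover; rewrite cardsT card_ffun !card_ord => /leq_trans; apply.
apply: leq_trans (leq_card_bigcup _ _) _.
by rewrite (eq_bigr (fun=> Vball n r q)) => [|x _]; rewrite ?sum_nat_const ?card_hamming_ball.
Qed.

Lemma INR_expn m k : INR (m ^ k) = (INR m ^ k)%R.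
Proof. by rewrite -pow_INR Nat_pow_expn. Qed.

Lemma INR_gt0 m : 0 < m -> (0 < INR m)%R.
Proof. by move=> m_gt0; apply/lt_0_INR/ltP. Qed.

Lemma le_INR_nat m k : m <= k -> (INR m <= INR k)%R.
Proof. by move/leP; apply: le_INR. Qed.

Lemma ln_INR_gt0 q : 2 <= q -> (0 < ln (INR q))%R.
Proof. by move=> q_ge2; rewrite -ln_1; apply: ln_increasing; [lra | apply/lt_1_INR/ltP]. Qed.

Lemma logqM_nat q a b : 0 < a -> 0 < b ->
  logq q (INR (a * b)) = (logq q (INR a) + logq q (INR b))%R.
Proof.
move=> a_gt0 b_gt0.
by rewrite /logq mult_INR ln_mult ?Rdiv_plus_distr //; apply: INR_gt0.
Qed.

Lemma logqX_nat q k : 2 <= q -> logq q (INR (q ^ k)) = INR k.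
Proof.
move=> q_ge2; have ln_gt0 := ln_INR_gt0 q_ge2.
rewrite /logq INR_expn ln_pow; first by field; lra.
by apply: INR_gt0; lia.
Qed.

Lemma logq_le_nat q a b : 2 <= q -> 0 < a -> a <= b ->
  (logq q (INR a) <= logq q (INR b))%R.
Proof.
move=> q_ge2 a_gt0 le_ab; apply: Rmult_le_compat_r.
  by apply/Rlt_le/Rinv_0_lt_compat/ln_INR_gt0.
have [lt_ab | ->] := Rle_lt_or_eq_dec _ _ (le_INR_nat le_ab); last exact: Rle_refl.
by apply/Rlt_le/ln_increasing; first exact: INR_gt0.
Qed.

Lemma logq_pred_bounds q : 2 <= q ->
  (0 <= logq q (INR (q - 1)) <= 1)%R.
Proof.
move=> q_ge2; split.
  by rewrite -[0%R]/(INR 0) -(logqX_nat 0 q_ge2); apply: logq_le_nat; lia.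
by rewrite -[1%R]/(INR 1) -(logqX_nat 1 q_ge2) expn1; apply: logq_le_nat; lia.
Qed.

Lemma zero_error_rate_le w d q n (F : {set word n q}) :
  0 < w -> d <= w -> 2 <= q -> 0 < n -> 0 < #|F| -> zero_error w d F ->
  (logq q (INR #|F|) / INR n <= 1 - INR d / INR w * logq q (INR (q - 1)))%R.
Proof.
move=> w_gt0 le_dw q_ge2 n_gt0 F_gt0 zeF.
have q_gt0 : 0 < q by lia.
have le_card := zero_error_card_mul_le w_gt0 q_gt0 zeF.
have le_dens := le_INR_nat (card_periodic_set_lbound n w_gt0 le_dw).
move: le_card le_dens; set m := #|periodic_set n w d| => le_card.
rewrite !mult_INR => le_dens.
have le_log : (logq q (INR #|F|) + INR m <= INR n)%R.
  rewrite -(logqX_nat m q_ge2) -(logqX_nat n q_ge2) -logqM_nat ?expn_gt0 ?q_gt0 //.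
  by apply: logq_le_nat; rewrite ?muln_gt0 ?expn_gt0 ?q_gt0 ?F_gt0.
have [a_ge0 a_le1] := logq_pred_bounds q_ge2.
have n_pos := INR_gt0 n_gt0; have w_pos := INR_gt0 w_gt0; have d_ge0 := pos_INR d.
set X := logq q (INR #|F|) in le_log *; set a := logq q (INR (q - 1)) in a_ge0 a_le1 *.
have le_Xw : (X * INR w <= (INR n - INR m) * INR w)%R.
  by apply: Rmult_le_compat_r; lra.
have le_dna : (INR d * INR n * a <= INR d * INR n)%R.
  rewrite -[X in (_ <= X)%R]Rmult_1_r; apply: Rmult_le_compat_l => //.
  by apply: Rmult_le_pos; lra.
apply: (Rmult_le_reg_r (INR n * INR w)); first exact: Rmult_lt_0_compat.
have -> : (X / INR n * (INR n * INR w) = X * INR w)%R by field; lra.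
have -> : ((1 - INR d / INR w * a) * (INR n * INR w) = INR n * INR w - INR d * INR n * a)%R.
  by field; lra.
lra.
Qed.

Lemma rates_packing_lbound w d q : 0 < w -> 2 <= q ->
  exists2 r, rates w d q r & (1 - / INR w * logq q (INR (Vball w (2 * d) q)) <= r)%R.
Proof.
move=> w_gt0 q_ge2; have [F [farF le_card]] := exists_hamming_packing w (2 * d) q.
have qw_gt0 : 0 < q ^ w by rewrite expn_gt0; lia.
have F_gt0 : 0 < #|F| by move: le_card; case: #|F|; lia.
have V_gt0 : 0 < Vball w (2 * d) q by move: le_card; case: Vball; rewrite ?muln0; lia.
exists (logq q (INR #|F|) / INR w)%R.
  by exists w, F; do 3!split => //; apply: zero_error_of_hamming.
have le_log : (INR w <= logq q (INR #|F|) + logq q (INR (Vball w (2 * d) q)))%R.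
  by rewrite -(logqX_nat w q_ge2) -logqM_nat //; apply: logq_le_nat.
have w_pos := INR_gt0 w_gt0.
apply: (Rmult_le_reg_r (INR w)) => //.
have -> : ((1 - / INR w * logq q (INR (Vball w (2 * d) q))) * INR w =
           INR w - logq q (INR (Vball w (2 * d) q)))%R by field; lra.
have -> : (logq q (INR #|F|) / INR w * INR w = logq q (INR #|F|))%R by field; lra.
lra.
Qed.

Lemma rates_singleton w d q : 0 < q -> rates w d q 0.
Proof.
move=> q_gt0; exists 1, [set ([ffun=> Ordinal q_gt0] : word 1 q)].
rewrite cards1; do 3!split => //; last by rewrite /logq ln_1 /Rdiv !Rmult_0_l.
by move=> x1 x2 /set1P -> /set1P ->.
Qed.

Lemma rates_ubound w d q : 0 < w -> d <= w -> 2 <= q ->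
  is_upper_bound (rates w d q) (1 - INR d / INR w * logq q (INR (q - 1)))%R.
Proof.
move=> w_gt0 le_dw q_ge2 r [n [F [n_gt0 [F_gt0 [zeF ->]]]]].
exact: zero_error_rate_le.
Qed.

Lemma rates_ubound_0 w d q : 0 < w -> 0 < q -> w <= 2 * d ->
  is_upper_bound (rates w d q) 0.
Proof.
move=> w_gt0 q_gt0 le_w2d r [n [F [_ [F_gt0 [zeF ->]]]]].
have -> : #|F| = 1 by have := zero_error_card_le1 w_gt0 q_gt0 le_w2d zeF; lia.
by rewrite /logq ln_1 /Rdiv !Rmult_0_l; apply: Rle_refl.
Qed.

Theorem theorem7 (w d q : nat) :
  1 <= w -> d <= w -> 2 <= q ->
  exists C0 : R, is_C0 w d q C0 /\
    (1 - / INR w * logq q (INR (Vball w (2 * d) q)) <= C0)%R /\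
    (C0 <= 1 - INR d / INR w * logq q (INR (q - 1)))%R /\
    (w <= 2 * d -> C0 = 0%R).
Proof.
move=> w_gt0 le_dw q_ge2; have q_gt0 : 0 < q by lia.
have ubound := rates_ubound w_gt0 le_dw q_ge2.
have rate0 := rates_singleton w d q_gt0.
have [C [ubC lubC]] := completeness (rates w d q) (ex_intro _ _ ubound) (ex_intro _ _ rate0).
exists C; split; first by [].
split.
  have [r rate_r le_r] := rates_packing_lbound d w_gt0 q_ge2.
  exact: Rle_trans le_r (ubC r rate_r).
split; first exact: lubC _ ubound.
move=> le_w2d; apply: Rle_antisym; last exact: ubC _ rate0.
exact: lubC _ (rates_ubound_0 w_gt0 q_gt0 le_w2d).
Qed.
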